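(* Let $\kappa>\omega$ be a cardinal, $S_\kappa$ the group of all permutations of $\kappa$, and $\mathcal{E}$ the coarse structure on $\kappa$ with base $\{E_H: H\subseteq S_\kappa \text{ finite}, \ \mathrm{id}\in H\}$, $E_H=\{(x,y):y\in Hx\}$. Let $\mathcal{F}$ be the discrete coarse structure on $\kappa$ defined by the bornology $[\kappa]^{<\kappa}$ and $\mathcal{E}'=\mathcal{F}\vee\mathcal{E}$. Then: the bounded sets of $(\kappa,\mathcal{E})$ are exactly the finite subsets; $(\kappa,\mathcal{E})$ is ultranormal but not extremely normal; $\mathcal{E}\subsetneq\mathcal{E}'$; and $(\kappa,\mathcal{E}')$ is extremely normal but not maximal.
   Context: A ballean $(X,\mathcal{E})$ is a set with a coarse structure. $E[x]=\{y:(x,y)\in E\}$, $E[A]=\bigcup_{a\in A}E[a]$. $Y$ is bounded if $Y\subseteq E[x]$ for some $x$ and $E\in\mathcal{E}$. $A$ is large if $X=E[A]$ for some $E$. Subsets $A,B$ are asymptotically disjoint if $E[A]\cap E[B]$ is bounded for every $E$. An unbounded ballean is ultranormal if no two unbounded subsets are asymptotically disjoint; extremely normal if every unbounded subset is large; maximal if $X$ is bounded in every coarse structure strictly containing $\mathcal{E}$. For a bornology $\mathcal{B}$ on $X$, the discrete coarse structure defined by $\mathcal{B}$ has base $\{E_B:B\in\mathcal{B}\}$ where $E_B[x]=B$ for $x\in B$ and $E_B[x]=\{x\}$ for $x\notin B$. $[\kappa]^{<\kappa}$ is the family of subsets of $\kappa$ of cardinality $<\kappa$. For coarse structures $\mathcal{E}_1,\mathcal{E}_2$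 on $X$, $\mathcal{E}_1\vee\mathcal{E}_2$ is the smallest coarse structure containing both. *)

From Stdlib Require Import List.
Import ListNotations.
Set Implicit Arguments.

Section Ballean.
Variable X : Type.

Definition rel := X -> X -> Prop.
Definition diag : rel := fun x y => x = y.
Definition subrel (E F : rel) : Prop := forall x y, E x y -> F x y.
Definition rinv (E : rel) : rel := fun x y => E y x.
Definition rcomp (E F : rel) : rel := fun x z => exists y, E x y /\ F y z.
Definition runion (E F : rel) : rel := fun x y => E x y \/ F x y.

Record coarse_structure (C : rel -> Prop) : Prop := {
  cs_diag : C diag;
  cs_has_diag : forall E, C E -> subrel diag E;
  cs_inv : forall E, C E -> C (rinv E);
  cs_comp : forall E F, C E -> C F -> C (rcomp E F);
  cs_union : forall E F, C E -> C F -> C (runion E F);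
  cs_sub : forall E E', C E -> subrel diag E' -> subrel E' E -> C E'
}.

Definition ball (E : rel) (x : X) : X -> Prop := fun y => E x y.
Definition ballset (E : rel) (A : X -> Prop) : X -> Prop :=
  fun y => exists a, A a /\ E a y.

Definition bounded (C : rel -> Prop) (Y : X -> Prop) : Prop :=
  exists x E, C E /\ forall y, Y y -> ball E x y.

Definition unbounded_ballean (C : rel -> Prop) : Prop :=
  ~ bounded C (fun _ => True).

Definition large (C : rel -> Prop) (A : X -> Prop) : Prop :=
  exists E, C E /\ forall x, ballset E A x.

Definition asymp_disjoint (C : rel -> Prop) (A B : X -> Prop) : Prop :=
  forall E, C E -> bounded C (fun y => ballset E A y /\ ballset E B y).

Definition ultranormal (C : rel -> Prop) : Prop :=
  unbounded_ballean C /\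
  forall A B, ~ bounded C A -> ~ bounded C B -> ~ asymp_disjoint C A B.

Definition extremely_normal (C : rel -> Prop) : Prop :=
  unbounded_ballean C /\ forall A, ~ bounded C A -> large C A.

Definition maximal (C : rel -> Prop) : Prop :=
  unbounded_ballean C /\
  forall C', coarse_structure C' -> (forall E, C E -> C' E) ->
    (exists E, C' E /\ ~ C E) -> bounded C' (fun _ => True).

Definition cjoin (C1 C2 : rel -> Prop) : rel -> Prop :=
  fun E => forall C, coarse_structure C -> (forall F, C1 F -> C F) ->
             (forall F, C2 F -> C F) -> C E.

Definition finite_set (Y : X -> Prop) : Prop :=
  exists l : list X, forall y, Y y -> In y l.

(* |A| < |X| (for a subset A of X: no injection of X into A) *)
Definition small (A : X -> Prop) : Prop :=
  ~ exists f : X -> X, (forall x y, f x = f y -> x = y) /\ forall x, A (f x).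

Definition bij (h : X -> X) : Prop :=
  exists g : X -> X, (forall x, g (h x) = x) /\ (forall y, h (g y) = y).

(* E_H for H = {id} ∪ H0, H0 a finite list of permutations *)
Definition EH (H0 : list (X -> X)) : rel :=
  fun x y => y = x \/ exists h, In h H0 /\ y = h x.

Definition perm_coarse : rel -> Prop :=
  fun E => subrel diag E /\
    exists H0 : list (X -> X), (forall h, In h H0 -> bij h) /\ subrel E (EH H0).

Definition EB (B : X -> Prop) : rel := fun x y => x = y \/ (B x /\ B y).

Definition small_discrete_coarse : rel -> Prop :=
  fun E => subrel diag E /\ exists B, small B /\ subrel E (EB B).

End Ballean.

(* For (K, E):
   a ball E_H[x] is {x} u Hx, so bounded means finite; two infinite sets with
   finite intersection are glued by a permutation exchanging sequences in
   their differences (ultranormality); a countable set is never large.  For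
   E': small sets are closed under finite unions, hence under entourage
   balls, so E' and any structure generated by small-preserving relations is
   unbounded; a non-small set is swapped onto its complement by an involution
   (extreme normality).  Every entourage of E' agrees off a small set with
   finitely many permutations, while a relation with countably infinite blocks
   does not; adding it gives a strictly larger unbounded structure. *)

From Stdlib Require Import List Classical ClassicalEpsilon Lia Arith Cantor.
From Stdlib Require Import FunctionalExtensionality PropExtensionality.
From mathcomp Require classical_sets.
Import ListNotations.
Set Bullet Behavior "Strict Subproofs".

Lemma zorn_union {T : Type} (P : (T -> Prop) -> Prop) :
  (forall F : (T -> Prop) -> Prop, (forall X, F X -> P X) ->
     (forall X Y, F X -> F Y -> (forall t, X t -> Y t) \/ (forall t, Y t -> X t)) ->
     P (fun t => exists X, F X /\ X t)) ->
  exists A, P A /\ forall B, P B -> (forall t, A t -> B t) -> forall t, B t -> A t.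
Proof.
  intros Hchain.
  destruct (@classical_sets.Zorn_bigcup T P) as [A [PA Amax]].
  - intros F FP Ftot. specialize (Hchain F FP Ftot).
    replace (classical_sets.bigcup F (fun X => X))
      with (fun t => exists X, F X /\ X t); [exact Hchain|].
    apply functional_extensionality; intro t.
    apply propositional_extensionality; split.
    + intros [X [FX Xt]]. exists X; assumption.
    + intros [X FX Xt]. exists X; split; assumption.
  - exists A. split; [exact PA|]. intros B PB AB t Bt.
    apply NNPP; intro nAt. apply (Amax B); [|exact PB].
    split; [exact AB|]. intro BA. exact (nAt (BA t Bt)).
Qed.

Section SetTheory.
Context {T : Type}.

Lemma seq_not_in_list (s : nat -> T) (l : list T) :
  (forall n m, s n = s m -> n = m) -> ~ (forall n, In (s n) l).
Proof.
  intros s_inj Hl.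
  assert (ND : NoDup (map s (seq 0 (S (length l))))).
  { apply NoDup_map_NoDup_ForallPairs; [|apply seq_NoDup].
    intros a b _ _. apply s_inj. }
  assert (Hincl : incl (map s (seq 0 (S (length l)))) l).
  { intros y Hy. apply in_map_iff in Hy. destruct Hy as [n [<- _]]. apply Hl. }
  pose proof (NoDup_incl_length ND Hincl) as Hle.
  rewrite length_map, length_seq in Hle. lia.
Qed.

Lemma infinite_seq (A : T -> Prop) : ~ finite_set A ->
  exists a : nat -> T, (forall n m, a n = a m -> n = m) /\ forall n, A (a n).
Proof.
  intro A_inf.
  destruct (choice (fun (l : list T) y => A y /\ ~ In y l)) as [next Hnext].
  { intro l. apply NNPP. intro H. apply A_inf. exists l. intros y Ay.
    apply NNPP. intro Hy. apply H. exists y. split; assumption. }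
  set (prefix := fix prefix (n : nat) : list T :=
         match n with 0 => [] | S n => next (prefix n) :: prefix n end).
  assert (Hprefix : forall n m, m < n -> In (next (prefix m)) (prefix n)).
  { induction n as [|n IH]; intros m Hm; [lia|].
    destruct (Nat.eq_dec m n) as [->|Hne]; [left; reflexivity|].
    right. apply IH. lia. }
  exists (fun n => next (prefix n)). split.
  - intros n m E. destruct (Nat.lt_total n m) as [H|[H|H]]; [|assumption|].
    + exfalso. apply (proj2 (Hnext (prefix m))). rewrite <- E. apply Hprefix, H.
    + exfalso. apply (proj2 (Hnext (prefix n))). rewrite E. apply Hprefix, H.
  - intro n. exact (proj1 (Hnext (prefix n))).
Qed.

Lemma infinite_minus (A B : T -> Prop) : ~ finite_set A ->
  finite_set (fun x => A x /\ B x) -> ~ finite_set (fun x => A x /\ ~ B x).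
Proof.
  intros A_inf [l Hl] [l' Hl']. apply A_inf. exists (l' ++ l). intros y Ay.
  apply in_or_app. destruct (classic (B y)); [right; apply Hl|left; apply Hl']; auto.
Qed.

(* A map sending U injectively into its complement extends to an involution
   of T: swap each u in U with f u and fix everything else. *)
Lemma involution_extending (U : T -> Prop) (f : T -> T) :
  (forall x, U x -> ~ U (f x)) -> (forall x y, U x -> U y -> f x = f y -> x = y) ->
  exists h : T -> T, (forall x, h (h x) = x) /\ forall x, U x -> h x = f x.
Proof.
  intros f_out f_inj.
  destruct (choice (fun x z => (U x /\ z = f x) \/
     (~ U x /\ exists u, U u /\ f u = x /\ z = u) \/
     (~ U x /\ ~ (exists u, U u /\ f u = x) /\ z = x))) as [h Hh].
  { intro x. destruct (classic (U x)) as [Ux|nUx]; [exists (f x); left; auto|].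
    destruct (classic (exists u, U u /\ f u = x)) as [[u [Uu Eu]]|Hn].
    - exists u. right; left. split; [assumption|]. exists u. auto.
    - exists x. right; right. auto. }
  assert (hU : forall x, U x -> h x = f x).
  { intros x Ux. destruct (Hh x) as [[_ E]|[[nU _]|[nU _]]]; tauto. }
  exists h. split; [|exact hU].
  intro x. destruct (Hh x) as [[Ux ->]|[[_ [u [Uu [<- ->]]]]|[_ [_ Ex]]]].
  - destruct (Hh (f x)) as [[Uf _]|[[_ [u [Uu [Eu ->]]]]|[_ [Hn _]]]].
    + exfalso. exact (f_out x Ux Uf).
    + apply f_inj; assumption.
    + exfalso. apply Hn. exists x. auto.
  - apply hU, Uu.
  - rewrite Ex, Ex. reflexivity.
Qed.

Lemma involution_bij (h : T -> T) : (forall x, h (h x) = x) -> bij h.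
Proof. intro hh. exists h. split; exact hh. Qed.

Lemma bij_id : bij (fun x : T => x).
Proof. apply involution_bij. reflexivity. Qed.

Lemma bij_comp (f g : T -> T) : bij f -> bij g -> bij (fun x => f (g x)).
Proof.
  intros [f' [f'f ff']] [g' [g'g gg']]. exists (fun y => g' (f' y)).
  split; intro x; [rewrite f'f; apply g'g|rewrite gg'; apply ff'].
Qed.

Lemma swap_sequences (a b : nat -> T) :
  (forall n m, a n = a m -> n = m) -> (forall n m, b n = b m -> n = m) ->
  (forall n m, a n <> b m) ->
  exists h, bij h /\ forall n, h (a n) = b n.
Proof.
  intros a_inj b_inj ab.
  destruct (choice (fun x z => forall n, x = a n -> z = b n)) as [f Hf].
  { intro x. destruct (classic (exists n, x = a n)) as [[n ->]|Hn].
    - exists (b n). intros m E. apply a_inj in E. subst. reflexivity.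
    - exists x. intros n E. exfalso. apply Hn. exists n. exact E. }
  destruct (involution_extending (fun x => exists n, x = a n) f) as [h [hh hf]].
  - intros x [n ->] [m E]. rewrite (Hf (a n) n eq_refl) in E. exact (ab m n (eq_sym E)).
  - intros x y [n ->] [m ->] E.
    rewrite (Hf _ n eq_refl), (Hf _ m eq_refl) in E. apply b_inj in E. subst. reflexivity.
  - exists h. split; [apply involution_bij, hh|].
    intro n. rewrite hf by (exists n; reflexivity). apply Hf. reflexivity.
Qed.

Lemma transposition (x0 y : T) : exists h, bij h /\ h x0 = y.
Proof.
  destruct (classic (y = x0)) as [->|y_x0].
  - exists (fun z => z). split; [apply involution_bij; reflexivity|reflexivity].
  - destruct (involution_extending (fun z => z = x0) (fun _ => y)) as [h [hh hx0]].
    + intros x _ E. exact (y_x0 E).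
    + intros x z -> -> _. reflexivity.
    + exists h. split; [apply involution_bij, hh|apply hx0; reflexivity].
Qed.

Definition embeds (P Q : T -> Prop) : Prop :=
  exists g : T -> T, (forall x, P x -> Q (g x)) /\
                     (forall x y, P x -> P y -> g x = g y -> x = y).

Definition seq_family (A : T -> Prop) (S : (nat -> T) -> Prop) : Prop :=
  (forall s, S s -> (forall n, A (s n)) /\ (forall n m, s n = s m -> n = m)) /\
  (forall s s' n m, S s -> S s' -> s n = s' m -> s = s').

(* By Zorn's lemma, a maximal such family leaves only finitely many points of
   A uncovered (otherwise the rest would contain one more sequence). *)
Lemma maximal_seq_family (A : T -> Prop) : exists S, seq_family A S /\
  finite_set (fun x => A x /\ ~ exists s n, S s /\ s n = x).
Proof.
  destruct (zorn_union (seq_family A)) as [S [[S_seq S_disj] S_max]].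
  { intros F F_fam F_chain. split.
    - intros s [X [FX Xs]]. exact (proj1 (F_fam X FX) s Xs).
    - intros s s' n m [X [FX Xs]] [Y [FY Ys']] E.
      destruct (F_chain X Y FX FY) as [XY|YX].
      + exact (proj2 (F_fam Y FY) s s' n m (XY s Xs) Ys' E).
      + exact (proj2 (F_fam X FX) s s' n m Xs (YX s' Ys') E). }
  exists S. split; [split; assumption|].
  apply NNPP. intro rest_inf. destruct (infinite_seq _ rest_inf) as [s0 [s0_inj s0_rest]].
  assert (S_ext : seq_family A (fun s => S s \/ s = s0)).
  { split.
    - intros s [Ss| ->]; [apply S_seq, Ss|]. split; [|exact s0_inj].
      intro n. exact (proj1 (s0_rest n)).
    - intros s s' n m [Ss| ->] [Ss'| ->] E; try reflexivity.
      + exact (S_disj s s' n m Ss Ss' E).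
      + exfalso. apply (proj2 (s0_rest m)). exists s, n. auto.
      + exfalso. apply (proj2 (s0_rest n)). exists s', m. auto. }
  apply (proj2 (s0_rest 0)). exists s0, 0. split; [|reflexivity].
  apply (S_max _ S_ext); [intros s Ss; left; exact Ss|right; reflexivity].
Qed.

(* If every point of A receives a code (s, k), with s in a family of disjoint
   sequences, injectively, then A x N embeds into A: (x, n) goes to the term of
   index <k, n> of s, for the Cantor pairing <_, _>. *)
Lemma absorb_from_codes (A : T -> Prop) (S : (nat -> T) -> Prop)
    (code : T -> (nat -> T) * nat) :
  seq_family A S -> (forall x, A x -> S (fst (code x))) ->
  (forall x y, A x -> A y -> code x = code y -> x = y) ->
  exists io : T -> nat -> T, (forall x n, A x -> A (io x n)) /\
    (forall x n y m, A x -> A y -> io x n = io y m -> x = y /\ n = m).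
Proof.
  intros [S_seq S_disj] code_S code_inj.
  exists (fun x n => fst (code x) (to_nat (snd (code x), n))). split.
  - intros x n Ax. apply S_seq, code_S, Ax.
  - intros x n y m Ax Ay E.
    pose proof (S_disj _ _ _ _ (code_S x Ax) (code_S y Ay) E) as Es.
    rewrite Es in E. apply (proj2 (S_seq _ (code_S y Ay))) in E.
    apply (f_equal of_nat) in E. rewrite !cancel_of_to in E.
    injection E as Ek En. split; [|exact En].
    apply code_inj; [exact Ax|exact Ay|].
    rewrite (surjective_pairing (code x)), (surjective_pairing (code y)), Es, Ek.
    reflexivity.
Qed.

(* Code
   the points of a maximal family of disjoint sequences by their position,
   using the even positions of one fixed sequence s0 for itself and the odd
   ones for the finitely many uncovered points. *)
Lemma absorb (A : T -> Prop) : ~ finite_set A ->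
  exists io : T -> nat -> T, (forall x n, A x -> A (io x n)) /\
    (forall x n y m, A x -> A y -> io x n = io y m -> x = y /\ n = m).
Proof.
  intro A_inf.
  destruct (maximal_seq_family A) as [S [S_fam [l Hl]]].
  set (covered := fun x => exists s n, S s /\ s n = x).
  assert (HS : exists s0, S s0).
  { apply NNPP. intro Hn. apply A_inf. exists l. intros y Ay. apply Hl.
    split; [exact Ay|]. intros [s [n [Ss _]]]. apply Hn. exists s. exact Ss. }
  destruct HS as [s0 Ss0].
  destruct (choice (fun x c => A x ->
     (exists s n, S s /\ s <> s0 /\ s n = x /\ c = (s, n)) \/
     (exists n, s0 n = x /\ c = (s0, 2 * n)) \/
     (exists i, nth_error l i = Some x /\ c = (s0, 2 * i + 1)))) as [code Hcode].
  { intro x. destruct (classic (A x)) as [Ax|nAx]; [|exists (s0, 0); tauto].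
    destruct (classic (covered x)) as [[s [n [Ss Esn]]]|ncov].
    - destruct (classic (s = s0)) as [->|Hne].
      + exists (s0, 2 * n). intros _. right; left. exists n. auto.
      + exists (s, n). intros _. left. exists s, n. auto.
    - destruct (In_nth_error l x (Hl x (conj Ax ncov))) as [i Hi].
      exists (s0, 2 * i + 1). intros _. right; right. exists i. auto. }
  apply (absorb_from_codes A S code S_fam).
  - intros x Ax.
    destruct (Hcode x Ax) as [[s [n [Ss [_ [_ ->]]]]]|[[n [_ ->]]|[i [_ ->]]]];
      assumption.
  - intros x y Ax Ay E.
    destruct (Hcode x Ax) as [[s [n [Ss [Ns [<- Ex]]]]]|[[n [<- Ex]]|[i [Li Ex]]]];
    destruct (Hcode y Ay) as [[t [m [St [Nt [<- Ey]]]]]|[[m [<- Ey]]|[j [Lj Ey]]]];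
    rewrite Ex, Ey in E; injection E; intros; subst;
    first [ congruence | (exfalso; lia) | (f_equal; lia)
          | (assert (i = j) by lia; subst; congruence) ].
Qed.

Definition matching (P Q : T -> Prop) (M : T -> T -> Prop) : Prop :=
  (forall x y, M x y -> P x /\ Q y) /\
  (forall x y y', M x y -> M x y' -> y = y') /\
  (forall x x' y, M x y -> M x' y -> x = x').

Lemma matching_flip (P Q : T -> Prop) (M : T -> T -> Prop) :
  matching P Q M -> matching Q P (fun y x => M x y).
Proof.
  intros [M_PQ [M_fun M_inj]]. split; [|split].
  - intros y x Mxy. destruct (M_PQ x y Mxy). split; assumption.
  - intros y x x' H H'. exact (M_inj x x' y H H').
  - intros y y' x H H'. exact (M_fun x y y' H H').
Qed.

Lemma matching_embeds (P Q : T -> Prop) (M : T -> T -> Prop) :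
  matching P Q M -> (forall x, P x -> exists y, M x y) -> embeds P Q.
Proof.
  intros [M_PQ [_ M_inj]] M_tot.
  destruct (choice (fun x y => P x -> M x y)) as [g Hg].
  { intro x. destruct (classic (P x)) as [Px|nPx].
    - destruct (M_tot x Px) as [y Hy]. exists y. intros _. exact Hy.
    - exists x. intro Px. contradiction. }
  exists g. split.
  - intros x Px. exact (proj2 (M_PQ x (g x) (Hg x Px))).
  - intros x y Px Py E. apply (M_inj x y (g x)); [apply Hg, Px|rewrite E; apply Hg, Py].
Qed.

(* By Zorn's lemma a maximal matching exists, and it exhausts P or Q: an
   unmatched point on each side could be matched with each other. *)
Lemma maximal_matching (P Q : T -> Prop) : exists M, matching P Q M /\
  ((forall x, P x -> exists y, M x y) \/ (forall y, Q y -> exists x, M x y)).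
Proof.
  destruct (zorn_union (fun G : T * T -> Prop => matching P Q (fun x y => G (x, y))))
    as [G [G_match G_max]].
  { intros F F_match F_chain. split; [|split].
    - intros x y [X [FX Xxy]]. exact (proj1 (F_match X FX) x y Xxy).
    - intros x y y' [X [FX H]] [Y [FY H']].
      destruct (F_chain X Y FX FY) as [XY|YX].
      + exact (proj1 (proj2 (F_match Y FY)) x y y' (XY _ H) H').
      + exact (proj1 (proj2 (F_match X FX)) x y y' H (YX _ H')).
    - intros x x' y [X [FX H]] [Y [FY H']].
      destruct (F_chain X Y FX FY) as [XY|YX].
      + exact (proj2 (proj2 (F_match Y FY)) x x' y (XY _ H) H').
      + exact (proj2 (proj2 (F_match X FX)) x x' y H (YX _ H')). }
  exists (fun x y => G (x, y)). split; [exact G_match|].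
  apply NNPP. intro H. apply not_or_and in H. destruct H as [nP nQ].
  apply not_all_ex_not in nP. destruct nP as [x0 nP]. apply imply_to_and in nP.
  apply not_all_ex_not in nQ. destruct nQ as [y0 nQ]. apply imply_to_and in nQ.
  destruct nP as [Px0 x0_free]. destruct nQ as [Qy0 y0_free].
  destruct G_match as [G_PQ [G_fun G_inj]].
  assert (G_ext : matching P Q (fun x y => G (x, y) \/ (x, y) = (x0, y0))).
  { split; [|split].
    - intros x y [Gxy|E]; [exact (G_PQ x y Gxy)|injection E as -> ->; auto].
    - intros x y y' [H|H] [H'|H'].
      + exact (G_fun x y y' H H').
      + injection H' as -> ->. exfalso. apply x0_free. exists y. exact H.
      + injection H as -> ->. exfalso. apply x0_free. exists y'. exact H'.
      + injection H as -> ->. injection H' as ->. reflexivity.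
    - intros x x' y [H|H] [H'|H'].
      + exact (G_inj x x' y H H').
      + injection H' as -> ->. exfalso. apply y0_free. exists x. exact H.
      + injection H as -> ->. exfalso. apply y0_free. exists x'. exact H'.
      + injection H as -> ->. injection H' as ->. reflexivity. }
  apply x0_free. exists y0.
  apply (G_max (fun p => G p \/ p = (x0, y0)) G_ext);
    [intros p Gp; left; exact Gp|right; reflexivity].
Qed.

Lemma embeds_compare (P Q : T -> Prop) : embeds P Q \/ embeds Q P.
Proof.
  destruct (maximal_matching P Q) as [M [M_match [M_P|M_Q]]].
  - left. exact (matching_embeds _ _ _ M_match M_P).
  - right. exact (matching_embeds _ _ _ (matching_flip _ _ _ M_match) M_Q).
Qed.
End SetTheory.

Section CoarseStructures.
Context {T : Type}.

Lemma perm_coarse_diag : perm_coarse (@diag T).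
Proof.
  split; [intros x y E; exact E|].
  exists []. split; [intros h []|]. intros x y E. left. symmetry. exact E.
Qed.

Lemma perm_coarse_EH (h : T -> T) : bij h -> perm_coarse (EH [h]).
Proof.
  intro h_bij. split; [intros x y E; left; symmetry; exact E|].
  exists [h]. split; [intros g [<-|[]]; exact h_bij|]. intros x y E. exact E.
Qed.

(* A ball of radius E_H around x is {x} u Hx, so bounded sets are finite. *)
Lemma perm_bounded_finite (Y : T -> Prop) : bounded (@perm_coarse T) Y -> finite_set Y.
Proof.
  intros [x [E [[_ [H0 [_ E_H0]]] Y_ball]]].
  exists (x :: map (fun h => h x) H0). intros y Yy.
  destruct (E_H0 x y (Y_ball y Yy)) as [->|[h [Hh ->]]]; [left; reflexivity|].
  right. apply in_map_iff. exists h. split; [reflexivity|exact Hh].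
Qed.

(* Conversely a finite set is covered from any centre x0 by the ball of
   radius E_H, H a list of permutations moving x0 to each of its points. *)
Lemma finite_perm_bounded (x0 : T) (Y : T -> Prop) :
  finite_set Y -> bounded (@perm_coarse T) Y.
Proof.
  intros [l Hl].
  assert (Hperms : exists H0 : list (T -> T), (forall h, In h H0 -> bij h) /\
            forall y, In y l -> exists h, In h H0 /\ y = h x0).
  { clear Hl. induction l as [|y l [H0 [H0_bij H0_l]]].
    - exists []. split; intros _ [].
    - destruct (transposition x0 y) as [h [h_bij hx0]]. exists (h :: H0). split.
      + intros g [<-|Hg]; [exact h_bij|exact (H0_bij g Hg)].
      + intros z [<-|Hz]; [exists h; split; [left|]; auto|].
        destruct (H0_l z Hz) as [g [Hg ->]]. exists g. split; [right|]; auto. }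
  destruct Hperms as [H0 [H0_bij H0_l]].
  exists x0, (EH H0). split.
  - split; [intros x y E; left; symmetry; exact E|]. exists H0. split; [exact H0_bij|].
    intros x y E. exact E.
  - intros y Yy. right. exact (H0_l y (Hl y Yy)).
Qed.

Lemma cjoin_left (C1 C2 : rel T -> Prop) (E : rel T) : C1 E -> cjoin C1 C2 E.
Proof. intros HE C _ HC1 _. exact (HC1 E HE). Qed.

Lemma cjoin_right (C1 C2 : rel T -> Prop) (E : rel T) : C2 E -> cjoin C1 C2 E.
Proof. intros HE C _ _ HC2. exact (HC2 E HE). Qed.

Definition word (w : list (rel T)) : rel T := fold_right (@rcomp T) (@diag T) w.

Lemma word_app (w1 w2 : list (rel T)) (x y z : T) :
  word w1 x y -> word w2 y z -> word (w1 ++ w2) x z.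
Proof.
  revert x. induction w1 as [|g w1 IH]; intros x H1 H2; simpl in *.
  - unfold diag in H1. subst. exact H2.
  - destruct H1 as [u [Hg Hw]]. exists u. split; [exact Hg|]. exact (IH u Hw H2).
Qed.

Lemma word_rinv (w : list (rel T)) (x y : T) :
  word w x y -> word (rev (map (@rinv T) w)) y x.
Proof.
  revert x. induction w as [|g w IH]; intros x H; simpl in *; [symmetry; exact H|].
  destruct H as [u [Hg Hw]]. apply (word_app _ _ _ u); [exact (IH u Hw)|].
  exists x. split; [exact Hg|reflexivity].
Qed.

(* The coarse structure generated by a family Gs of relations closed under
   inversion: entourages are the reflexive relations contained in a finite
   union of words in Gs. *)
Definition Gen (Gs : rel T -> Prop) : rel T -> Prop := fun E =>
  subrel (@diag T) E /\ exists ws : list (list (rel T)),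
    (forall w g, In w ws -> In g w -> Gs g) /\
    forall x y, E x y -> exists w, In w ws /\ word w x y.

Lemma Gen_coarse (Gs : rel T -> Prop) :
  (forall g, Gs g -> Gs (rinv g)) -> coarse_structure (Gen Gs).
Proof.
  intro Gs_inv. constructor.
  - split; [intros x y H; exact H|]. exists [[]]. split; [intros w g [<-|[]] []|].
    intros x y H. exists []. split; [left; reflexivity|exact H].
  - intros E [E_diag _]. exact E_diag.
  - intros E [E_diag [ws [ws_Gs E_ws]]]. split.
    + intros x y H. apply E_diag. symmetry. exact H.
    + exists (map (fun w => rev (map (@rinv T) w)) ws). split.
      * intros w g Hw Hg. apply in_map_iff in Hw. destruct Hw as [w0 [<- Hw0]].
        apply in_rev, in_map_iff in Hg. destruct Hg as [g0 [<- Hg0]].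
        apply Gs_inv. exact (ws_Gs w0 g0 Hw0 Hg0).
      * intros x y H. destruct (E_ws y x H) as [w [Hw W]].
        exists (rev (map (@rinv T) w)). split; [exact (in_map (fun w => rev (map (@rinv T) w)) ws w Hw)|].
        apply word_rinv, W.
  - intros E F [E_diag [ws [ws_Gs E_ws]]] [F_diag [vs [vs_Gs F_vs]]]. split.
    + intros x y H. exists x. split; [apply E_diag; reflexivity|apply F_diag, H].
    + exists (flat_map (fun w => map (fun v => w ++ v) vs) ws). split.
      * intros u g Hu Hg. apply in_flat_map in Hu. destruct Hu as [w [Hw Hu]].
        apply in_map_iff in Hu. destruct Hu as [v [<- Hv]].
        apply in_app_or in Hg. destruct Hg; eauto.
      * intros x z [y [Hxy Hyz]]. destruct (E_ws x y Hxy) as [w [Hw W]].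
        destruct (F_vs y z Hyz) as [v [Hv V]]. exists (w ++ v). split.
        -- apply in_flat_map. exists w. split; [exact Hw|]. exact (in_map (fun v => w ++ v) vs v Hv).
        -- exact (word_app _ _ _ _ _ W V).
  - intros E F [E_diag [ws [ws_Gs E_ws]]] [F_diag [vs [vs_Gs F_vs]]]. split.
    + intros x y H. left. apply E_diag, H.
    + exists (ws ++ vs). split.
      * intros w g Hw Hg. apply in_app_or in Hw. destruct Hw; eauto.
      * intros x y [H|H].
        -- destruct (E_ws x y H) as [w [Hw W]]. exists w. split; [apply in_or_app|]; auto.
        -- destruct (F_vs x y H) as [w [Hw W]]. exists w. split; [apply in_or_app|]; auto.
  - intros E E' [_ [ws [ws_Gs E_ws]]] E'_diag E'_E. split; [exact E'_diag|].
    exists ws. split; [exact ws_Gs|]. intros x y H. exact (E_ws x y (E'_E x y H)).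
Qed.

Lemma Gen_generator (Gs : rel T -> Prop) (E : rel T) :
  Gs E -> subrel (@diag T) E -> Gen Gs E.
Proof.
  intros HE E_diag. split; [exact E_diag|]. exists [[E]]. split.
  - intros w g [<-|[]] [<-|[]]. exact HE.
  - intros x y H. exists [E]. split; [left; reflexivity|]. exists y. split; [exact H|reflexivity].
Qed.

Lemma cjoin_sub_Gen (C1 C2 Gs : rel T -> Prop) :
  (forall g, Gs g -> Gs (rinv g)) ->
  (forall E, C1 E -> Gs E /\ subrel (@diag T) E) ->
  (forall E, C2 E -> Gs E /\ subrel (@diag T) E) ->
  forall E, cjoin C1 C2 E -> Gen Gs E.
Proof.
  intros Gs_inv C1_Gs C2_Gs E HE. apply HE.
  - apply Gen_coarse, Gs_inv.
  - intros F HF. destruct (C1_Gs F HF). apply Gen_generator; assumption.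
  - intros F HF. destruct (C2_Gs F HF). apply Gen_generator; assumption.
Qed.

Definition join_generator (g : rel T) : Prop :=
  perm_coarse g \/ small_discrete_coarse g.

Lemma inverse_choice : exists inv : (T -> T) -> T -> T,
  forall h, bij h -> bij (inv h) /\ forall x, inv h (h x) = x.
Proof.
  apply (choice (fun h g => bij h -> bij g /\ forall x, g (h x) = x)).
  intro h. destruct (classic (bij h)) as [[g [gh hg]]|nb]; [|exists h; tauto].
  exists g. intros _. split; [exists h; split; assumption|exact gh].
Qed.

Lemma join_generator_rinv (g : rel T) : join_generator g -> join_generator (rinv g).
Proof.
  intros [[g_diag [H0 [H0_bij g_H0]]]|[g_diag [B [B_small g_B]]]].
  - left. destruct inverse_choice as [inv Hinv]. split.
    + intros x y E. apply g_diag. symmetry. exact E.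
    + exists (map inv H0). split.
      * intros g' Hg'. apply in_map_iff in Hg'. destruct Hg' as [h [<- Hh]].
        exact (proj1 (Hinv h (H0_bij h Hh))).
      * intros x y H. destruct (g_H0 y x H) as [->|[h [Hh ->]]]; [left; reflexivity|].
        right. exists (inv h). split; [exact (in_map inv H0 h Hh)|].
        symmetry. exact (proj2 (Hinv h (H0_bij h Hh)) y).
  - right. split; [intros x y E; apply g_diag; symmetry; exact E|].
    exists B. split; [exact B_small|]. intros x y H.
    destruct (g_B y x H) as [->|[By Bx]]; [left; reflexivity|right; split; assumption].
Qed.

Lemma join_sub_Gen (Gs : rel T -> Prop) :
  (forall g, Gs g -> Gs (rinv g)) -> (forall g, join_generator g -> Gs g) ->
  forall E, cjoin (@small_discrete_coarse T) (@perm_coarse T) E -> Gen Gs E.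
Proof.
  intros Gs_inv Gs_join. apply cjoin_sub_Gen; [exact Gs_inv| |];
    intros E HE; (split; [apply Gs_join|]).
  - right. exact HE.
  - exact (proj1 HE).
  - left. exact HE.
  - exact (proj1 HE).
Qed.
End CoarseStructures.

Section UncountableType.
Variable K : Type.
Hypothesis K_uncountable : ~ exists f : K -> nat, forall x y, f x = f y -> x = y.

Lemma K_inhabited : inhabited K.
Proof.
  apply NNPP. intro H. apply K_uncountable. exists (fun _ => 0).
  intros x. exfalso. exact (H (inhabits x)).
Qed.

(* K does not inject into l x N for a finite list l: the position in l and
   the second coordinate would inject K into N. *)
Lemma pairs_with_list_not_injective (l : list K) (phi : K -> K * nat) :
  (forall x y, phi x = phi y -> x = y) -> ~ (forall x, In (fst (phi x)) l).
Proof.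
  intros phi_inj Hl. apply K_uncountable.
  destruct (choice (fun x i => nth_error l i = Some (fst (phi x)))) as [idx Hidx].
  { intro x. apply In_nth_error, Hl. }
  exists (fun x => to_nat (idx x, snd (phi x))). intros x y E.
  apply (f_equal of_nat) in E. rewrite !cancel_of_to in E. injection E as Ei En.
  apply phi_inj. pose proof (Hidx x) as Hx. rewrite Ei, Hidx in Hx. injection Hx as Ex.
  rewrite (surjective_pairing (phi x)), (surjective_pairing (phi y)), Ex, En.
  reflexivity.
Qed.

Lemma K_infinite : ~ finite_set (fun _ : K => True).
Proof.
  intros [l Hl]. apply (pairs_with_list_not_injective l (fun x => (x, 0))).
  - intros x y E. injection E as E. exact E.
  - intro x. apply Hl. exact I.
Qed.

(* If K embeds into A x N then it embeds into A: A cannot be finite, and an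
   infinite A absorbs the factor N. *)
Lemma not_small_of_pairs (A : K -> Prop) (phi : K -> K * nat) :
  (forall x y, phi x = phi y -> x = y) -> (forall x, A (fst (phi x))) -> ~ small A.
Proof.
  intros phi_inj phi_A A_small.
  destruct (classic (finite_set A)) as [[l Hl]|A_inf].
  - apply (pairs_with_list_not_injective l phi phi_inj). intro x. apply Hl, phi_A.
  - destruct (absorb A A_inf) as [io [io_A io_inj]]. apply A_small.
    exists (fun x => io (fst (phi x)) (snd (phi x))). split.
    + intros x y E. apply io_inj in E; [|apply phi_A|apply phi_A]. destruct E as [E1 E2].
      apply phi_inj.
      rewrite (surjective_pairing (phi x)), (surjective_pairing (phi y)), E1, E2.
      reflexivity.
    + intro x. apply io_A, phi_A.
Qed.

Lemma cover_by_two (P Q : K -> Prop) :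
  (forall x, P x \/ Q x) -> embeds Q P -> ~ small P.
Proof.
  intros PQ [g [g_P g_inj]].
  destruct (choice (fun x c => (P x /\ c = (x, 0)) \/ (~ P x /\ c = (g x, 1))))
    as [phi Hphi].
  { intro x. destruct (classic (P x)); eauto. }
  apply (not_small_of_pairs P phi).
  - intros x y E.
    destruct (Hphi x) as [[Px Ex]|[Px Ex]]; destruct (Hphi y) as [[Py Ey]|[Py Ey]];
      rewrite Ex, Ey in E; injection E; intros; try congruence.
    apply g_inj; [destruct (PQ x)|destruct (PQ y)|]; tauto.
  - intro x. destruct (Hphi x) as [[Px ->]|[nPx ->]]; [exact Px|].
    apply g_P. destruct (PQ x); tauto.
Qed.

(* The union of two small sets is small: pulling back a covering of K,
   compare the two parts and use cover_by_two. *)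
Lemma small_union (A B : K -> Prop) : small A -> small B -> small (fun x => A x \/ B x).
Proof.
  intros A_small B_small [f [f_inj f_AB]].
  set (P := fun x => A (f x)). set (Q := fun x => ~ A (f x)).
  assert (PQ : forall x, P x \/ Q x) by (intro x; apply classic).
  destruct (embeds_compare P Q) as [PQ_emb|QP_emb].
  - apply (cover_by_two Q P) in PQ_emb; [|intro x; destruct (PQ x); tauto].
    apply PQ_emb. intros [g [g_inj g_Q]]. apply B_small.
    exists (fun x => f (g x)). split.
    + intros x y E. apply g_inj, f_inj, E.
    + intro x. destruct (f_AB (g x)) as [Ax|Bx]; [exfalso; exact (g_Q x Ax)|exact Bx].
  - apply (cover_by_two P Q PQ) in QP_emb. apply QP_emb. intros [g [g_inj g_P]].
    apply A_small. exists (fun x => f (g x)). split.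
    + intros x y E. apply g_inj, f_inj, E.
    + intro x. apply g_P.
Qed.

Lemma small_sub (A B : K -> Prop) : (forall x, A x -> B x) -> small B -> small A.
Proof. intros AB B_small [f [f_inj f_A]]. apply B_small. exists f. split; auto. Qed.

Lemma small_empty : small (fun _ : K => False).
Proof. intros [f [_ f_A]]. destruct K_inhabited as [x]. exact (f_A x). Qed.

Lemma not_small_K : ~ small (fun _ : K => True).
Proof. intro H. apply H. exists (fun x => x). split; auto. Qed.

Lemma small_range (a : nat -> K) : small (fun x => exists n, x = a n).
Proof.
  intros [f [f_inj f_a]]. apply K_uncountable.
  destruct (choice (fun x n => f x = a n)) as [idx Hidx].
  { intro x. destruct (f_a x) as [n E]. exists n. exact E. }
  exists idx. intros x y E. apply f_inj. rewrite Hidx, Hidx, E. reflexivity.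
Qed.

Lemma small_singleton (x0 : K) : small (fun y => y = x0).
Proof.
  apply (small_sub _ (fun x => exists n, x = (fun _ : nat => x0) n)).
  - intros y E. exists 0. exact E.
  - apply small_range.
Qed.

Lemma small_list_union {I : Type} (F : I -> K -> Prop) (ws : list I) :
  (forall w, In w ws -> small (F w)) -> small (fun y => exists w, In w ws /\ F w y).
Proof.
  induction ws as [|w ws IH]; intro F_small.
  - apply (small_sub _ (fun _ => False)); [intros y [w [[] _]]|exact small_empty].
  - apply (small_sub _ (fun y => F w y \/ exists v, In v ws /\ F v y)).
    + intros y [v [[<-|Hv] Fv]]; [left; exact Fv|right; exists v; auto].
    + apply small_union; [apply F_small; left; reflexivity|].
      apply IH. intros v Hv. apply F_small. right. exact Hv.
Qed.

Lemma small_image (h : K -> K) (B : K -> Prop) : bij h -> small B ->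
  small (fun y => exists b, B b /\ y = h b).
Proof.
  intros [g [gh hg]] B_small [f [f_inj f_hB]]. apply B_small.
  exists (fun x => g (f x)). split.
  - intros x y E. apply f_inj. rewrite <- (hg (f x)), <- (hg (f y)), E. reflexivity.
  - intro x. destruct (f_hB x) as [b [Bb ->]]. rewrite gh. exact Bb.
Qed.

Lemma small_preimage (h : K -> K) (B : K -> Prop) : bij h -> small B ->
  small (fun x => B (h x)).
Proof.
  intros [g [gh hg]] B_small [f [f_inj f_B]]. apply B_small.
  exists (fun x => h (f x)). split; [|exact f_B].
  intros x y E. apply f_inj. rewrite <- (gh (f x)), <- (gh (f y)), E. reflexivity.
Qed.

Lemma perm_bounded_iff_finite (Y : K -> Prop) :
  bounded (@perm_coarse K) Y <-> finite_set Y.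
Proof.
  destruct K_inhabited as [x0].
  split; [apply perm_bounded_finite|apply finite_perm_bounded, x0].
Qed.

Lemma perm_unbounded : unbounded_ballean (@perm_coarse K).
Proof. intro H. apply K_infinite, perm_bounded_finite, H. Qed.

(* Two infinite sets A, B are never asymptotically disjoint: A n B is finite
   (take E = diag), so A \ B and B \ A contain injective sequences a and b,
   and for the permutation h exchanging them E_h[A] n E_h[B] contains the
   range of b. *)
Lemma perm_ultranormal : ultranormal (@perm_coarse K).
Proof.
  split; [exact perm_unbounded|]. intros A B A_unb B_unb AB_disj.
  rewrite perm_bounded_iff_finite in A_unb, B_unb.
  assert (AB_fin : finite_set (fun x => A x /\ B x)).
  { destruct (perm_bounded_finite _ (AB_disj _ perm_coarse_diag)) as [l Hl].
    exists l. intros y [Ay By]. apply Hl.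
    split; exists y; split; (assumption || reflexivity). }
  assert (BA_fin : finite_set (fun x => B x /\ A x)).
  { destruct AB_fin as [l Hl]. exists l. intros y [By Ay]. apply Hl. split; assumption. }
  destruct (infinite_seq _ (infinite_minus A B A_unb AB_fin)) as [a [a_inj a_AB]].
  destruct (infinite_seq _ (infinite_minus B A B_unb BA_fin)) as [b [b_inj b_BA]].
  destruct (swap_sequences a b a_inj b_inj) as [h [h_bij h_ab]].
  { intros n m E. apply (proj2 (a_AB n)). rewrite E. exact (proj1 (b_BA m)). }
  destruct (perm_bounded_finite _ (AB_disj _ (perm_coarse_EH h h_bij))) as [l Hl].
  apply (seq_not_in_list b l b_inj). intro n. apply Hl. split.
  - exists (a n). split; [exact (proj1 (a_AB n))|].
    right. exists h. split; [left; reflexivity|]. symmetry. apply h_ab.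
  - exists (b n). split; [exact (proj1 (b_BA n))|]. left. reflexivity.
Qed.

(* The range of an injective sequence is unbounded but not large: finitely
   many permutations move it onto a countable set only. *)
Lemma perm_not_extremely_normal : ~ extremely_normal (@perm_coarse K).
Proof.
  intros [_ ext]. destruct (infinite_seq _ K_infinite) as [a [a_inj _]].
  destruct (ext (fun x => exists n, x = a n)) as [E [[_ [H0 [_ E_H0]]] E_cover]].
  { intro H. apply perm_bounded_finite in H. destruct H as [l Hl].
    apply (seq_not_in_list a l a_inj). intro n. apply Hl. exists n. reflexivity. }
  apply K_uncountable.
  destruct (choice (fun x (p : nat * nat) =>
              x = nth (fst p) ((fun z => z) :: H0) (fun z => z) (a (snd p)))) as [c Hc].
  { intro x. destruct (E_cover x) as [y [[n ->] Exy]].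
    destruct (E_H0 _ _ Exy) as [->|[h [Hh ->]]]; [exists (0, n); reflexivity|].
    destruct (In_nth H0 h (fun z => z) Hh) as [i [_ Ei]].
    exists (S i, n). simpl. rewrite Ei. reflexivity. }
  exists (fun x => to_nat (c x)). intros x y Exy.
  apply (f_equal of_nat) in Exy. rewrite !cancel_of_to in Exy.
  rewrite (Hc x), (Hc y), Exy. reflexivity.
Qed.

(* Entourages of either structure enlarge small sets only to small sets:
   E_H[A] is a finite union of images of A, and E_B[A] lies in A u B. *)
Lemma join_generator_ball_small (g : rel K) :
  join_generator g -> forall A, small A -> small (ballset g A).
Proof.
  intros [[_ [H0 [H0_bij g_H0]]]|[_ [B [B_small g_B]]]] A A_small.
  - apply (small_sub _ (fun y => A y \/
             exists h, In h H0 /\ (fun h y => exists b, A b /\ y = h b) h y)).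
    + intros y [a [Aa Hay]]. destruct (g_H0 _ _ Hay) as [->|[h [Hh ->]]]; [left; exact Aa|].
      right. exists h. split; [exact Hh|]. exists a. split; [exact Aa|reflexivity].
    + apply small_union; [exact A_small|]. apply small_list_union.
      intros h Hh. apply small_image; [apply H0_bij, Hh|exact A_small].
  - apply (small_sub _ (fun y => A y \/ B y)); [|apply small_union; assumption].
    intros y [a [Aa Hay]]. destruct (g_B _ _ Hay) as [<-|[_ By]]; [left|right]; assumption.
Qed.

(* If all generators preserve small sets, so do all words, and a ball
   E[x] lies in finitely many word-balls of the small set {x}; as K itself is
   not small, the generated structure is unbounded. *)
Lemma Gen_unbounded (Gs : rel K -> Prop) :
  (forall g, Gs g -> forall A, small A -> small (ballset g A)) ->
  unbounded_ballean (Gen Gs).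
Proof.
  intros Gs_small [x [E [[_ [ws [ws_Gs E_ws]]] E_cover]]].
  assert (word_small : forall w, (forall g, In g w -> Gs g) ->
            forall A, small A -> small (ballset (word w) A)).
  { induction w as [|g w IH]; intros w_Gs A A_small.
    - apply (small_sub _ A); [|exact A_small].
      intros y [a [Aa Hay]]. simpl in Hay. unfold diag in Hay. subst. exact Aa.
    - apply (small_sub _ (ballset (word w) (ballset g A))).
      + intros z [a [Aa [y [Hay Hyz]]]]. exists y. split; [exists a; split|]; assumption.
      + apply IH; [intros h Hh; apply w_Gs; right; exact Hh|].
        apply Gs_small; [apply w_Gs; left; reflexivity|exact A_small]. }
  apply not_small_K.
  apply (small_sub _ (fun y => exists w, In w ws /\ ballset (word w) (fun z => z = x) y)).
  - intros y _. destruct (E_ws x y (E_cover y I)) as [w [Hw W]].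
    exists w. split; [exact Hw|]. exists x. split; [reflexivity|exact W].
  - apply small_list_union. intros w Hw. apply word_small; [|apply small_singleton].
    intros g Hg. exact (ws_Gs w g Hw Hg).
Qed.

Definition join_coarse : rel K -> Prop :=
  cjoin (@small_discrete_coarse K) (@perm_coarse K).

Lemma join_sub_Gen_generators (E : rel K) : join_coarse E -> Gen join_generator E.
Proof. apply join_sub_Gen; [exact join_generator_rinv|intros g H; exact H]. Qed.

Lemma join_unbounded : unbounded_ballean join_coarse.
Proof.
  intros [x [E [HE E_cover]]].
  apply (Gen_unbounded join_generator join_generator_ball_small).
  exists x, E. split; [apply join_sub_Gen_generators, HE|exact E_cover].
Qed.

(* A small set is bounded via E_A; a set A that is not small receives an
   injection f of K, and the involution extending f on the complement of A
   gives an entourage E_h with E_h[A] = K. *)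
Lemma join_extremely_normal : extremely_normal join_coarse.
Proof.
  split; [exact join_unbounded|]. intros A A_unb.
  destruct (classic (small A)) as [A_small|A_big].
  - exfalso. apply A_unb. destruct K_inhabited as [x0].
    assert (EA_join : join_coarse (EB A)).
    { apply cjoin_left. split; [intros x y E; left; exact E|].
      exists A. split; [exact A_small|]. intros x y E. exact E. }
    destruct (classic (exists a, A a)) as [[a Aa]|A_empty].
    + exists a, (EB A). split; [exact EA_join|]. intros y Ay. right. split; assumption.
    + exists x0, (EB A). split; [exact EA_join|].
      intros y Ay. exfalso. apply A_empty. exists y. exact Ay.
  - apply NNPP in A_big. destruct A_big as [f [f_inj f_A]].
    destruct (involution_extending (fun x => ~ A x) f) as [h [hh hf]].
    { intros x _ H. exact (H (f_A x)). }
    { intros x y _ _ E. exact (f_inj x y E). }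
    exists (EH [h]). split.
    + apply cjoin_right, perm_coarse_EH, involution_bij, hh.
    + intro x. destruct (classic (A x)) as [Ax|nAx].
      * exists x. split; [exact Ax|]. left. reflexivity.
      * exists (f x). split; [exact (f_A x)|]. right. exists h. split; [left; reflexivity|].
        rewrite <- (hf x nAx). symmetry. apply hh.
Qed.

(* E_B for a countably infinite B belongs to E' but not to E: its ball
   around a point of B is infinite. *)
Lemma join_strictly_larger : exists E, join_coarse E /\ ~ perm_coarse E.
Proof.
  destruct (infinite_seq _ K_infinite) as [a [a_inj _]].
  exists (EB (fun x => exists n, x = a n)). split.
  - apply cjoin_left. split; [intros x y E; left; exact E|].
    exists (fun x => exists n, x = a n). split; [apply small_range|]. intros x y E. exact E.
  - intros [_ [H0 [_ E_H0]]].
    apply (seq_not_in_list a (a 0 :: map (fun h => h (a 0)) H0) a_inj). intro n.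
    destruct (E_H0 (a 0) (a n)) as [->|[h [Hh ->]]].
    + right. split; [exists 0|exists n]; reflexivity.
    + left. reflexivity.
    + right. apply in_map_iff. exists h. split; [reflexivity|exact Hh].
Qed.

Definition almost_perm (E : rel K) : Prop :=
  exists B, small B /\ exists L : list (K -> K), (forall l, In l L -> bij l) /\
    forall x y, ~ B x -> E x y -> exists l, In l L /\ y = l x.

Lemma almost_perm_sub (E F : rel K) : subrel E F -> almost_perm F -> almost_perm E.
Proof.
  intros EF [B [B_small [L [L_bij F_L]]]]. exists B. split; [exact B_small|].
  exists L. split; [exact L_bij|]. intros x y nBx Exy. exact (F_L x y nBx (EF x y Exy)).
Qed.

Lemma join_generator_almost_perm (g : rel K) : join_generator g -> almost_perm g.
Proof.
  intros [[_ [H0 [H0_bij g_H0]]]|[_ [B [B_small g_B]]]].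
  - exists (fun _ => False). split; [exact small_empty|].
    exists ((fun x => x) :: H0). split; [intros l [<-|Hl]; [apply bij_id|apply H0_bij, Hl]|].
    intros x y _ Hxy. destruct (g_H0 x y Hxy) as [->|[h [Hh ->]]].
    + exists (fun x => x). split; [left|]; reflexivity.
    + exists h. split; [right; exact Hh|reflexivity].
  - exists B. split; [exact B_small|]. exists [fun x => x].
    split; [intros l [<-|[]]; apply bij_id|].
    intros x y nBx Hxy. exists (fun x => x). split; [left; reflexivity|].
    destruct (g_B x y Hxy) as [->|[Bx _]]; [reflexivity|contradiction].
Qed.

(* Composition: off B1 and the preimages of B2 under the permutations of L1,
   a composite step is l2 o l1. *)
Lemma almost_perm_rcomp (E F : rel K) :
  almost_perm E -> almost_perm F -> almost_perm (rcomp E F).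
Proof.
  intros [B1 [B1_small [L1 [L1_bij E_L1]]]] [B2 [B2_small [L2 [L2_bij F_L2]]]].
  exists (fun x => B1 x \/ exists l, In l L1 /\ (fun l x => B2 (l x)) l x). split.
  { apply small_union; [exact B1_small|]. apply small_list_union.
    intros l Hl. apply small_preimage; [apply L1_bij, Hl|exact B2_small]. }
  exists (map (fun p x => snd p (fst p x)) (list_prod L1 L2)). split.
  - intros l Hl. apply in_map_iff in Hl. destruct Hl as [[l1 l2] [<- Hp]].
    apply in_prod_iff in Hp. apply bij_comp; [apply L2_bij|apply L1_bij]; tauto.
  - intros x z nBx [y [Exy Fyz]].
    destruct (E_L1 x y (fun H => nBx (or_introl H)) Exy) as [l1 [Hl1 ->]].
    assert (nB2 : ~ B2 (l1 x)) by (intro H; apply nBx; right; exists l1; auto).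
    destruct (F_L2 _ z nB2 Fyz) as [l2 [Hl2 ->]].
    exists (fun x => l2 (l1 x)). split; [|reflexivity].
    apply (in_map_iff (fun p x => snd p (fst p x))). exists (l1, l2).
    split; [reflexivity|apply in_prod; assumption].
Qed.

Lemma almost_perm_word (w : list (rel K)) :
  (forall g, In g w -> join_generator g) -> almost_perm (word w).
Proof.
  induction w as [|g w IH]; intro w_gen.
  - exists (fun _ => False). split; [exact small_empty|].
    exists [fun x => x]. split; [intros l [<-|[]]; apply bij_id|].
    intros x y _ Exy. exists (fun x => x). split; [left; reflexivity|].
    symmetry. exact Exy.
  - apply almost_perm_rcomp.
    + apply join_generator_almost_perm, w_gen. left. reflexivity.
    + apply IH. intros h Hh. apply w_gen. right. exact Hh.
Qed.

Lemma almost_perm_list_union {I : Type} (R : I -> rel K) (ws : list I) :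
  (forall w, In w ws -> almost_perm (R w)) ->
  almost_perm (fun x y => exists w, In w ws /\ R w x y).
Proof.
  induction ws as [|w ws IH]; intro ws_ap.
  - exists (fun _ => False). split; [exact small_empty|]. exists [].
    split; [intros l []|]. intros x y _ [w [[] _]].
  - destruct (ws_ap w (or_introl eq_refl)) as [B1 [B1_small [L1 [L1_bij R_L1]]]].
    destruct IH as [B2 [B2_small [L2 [L2_bij R_L2]]]].
    { intros v Hv. apply ws_ap. right. exact Hv. }
    exists (fun x => B1 x \/ B2 x). split; [apply small_union; assumption|].
    exists (L1 ++ L2). split.
    + intros l Hl. apply in_app_or in Hl. destruct Hl; auto.
    + intros x y nBx [v [[<-|Hv] Rxy]].
      * destruct (R_L1 x y (fun H => nBx (or_introl H)) Rxy) as [l [Hl ->]].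
        exists l. split; [apply in_or_app; left; exact Hl|reflexivity].
      * destruct (R_L2 x y (fun H => nBx (or_intror H)) (ex_intro _ v (conj Hv Rxy)))
          as [l [Hl ->]].
        exists l. split; [apply in_or_app; right; exact Hl|reflexivity].
Qed.

Lemma join_almost_perm (E : rel K) : join_coarse E -> almost_perm E.
Proof.
  intro HE. destruct (join_sub_Gen_generators E HE) as [_ [ws [ws_gen E_ws]]].
  apply (almost_perm_sub _ _ E_ws). apply almost_perm_list_union.
  intros w Hw. apply almost_perm_word. intros g Hg. exact (ws_gen w g Hw Hg).
Qed.

(* Given an injection io : K x N -> K, the equivalence relation whose classes
   are the countable blocks {io a n | n in N} (and singletons elsewhere). *)
Definition block_rel (io : K -> nat -> K) : rel K :=
  fun x y => x = y \/ exists a n m, x = io a n /\ y = io a m.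

Lemma block_rel_sym (io : K -> nat -> K) (x y : K) :
  block_rel io x y -> block_rel io y x.
Proof.
  intros [E|[a [n [m [-> ->]]]]]; [left; symmetry; exact E|right; exists a, m, n; auto].
Qed.

(* A ball of a block relation around A is covered by A x N: each new point
   io a m is coded by a point io a n of A and its index m. *)
Lemma block_rel_ball_small (io : K -> nat -> K) :
  (forall x n y m, io x n = io y m -> x = y /\ n = m) ->
  forall A, small A -> small (ballset (block_rel io) A).
Proof.
  intros io_inj A A_small [f [f_inj f_ball]].
  destruct (choice (fun y (c : K * nat) => ballset (block_rel io) A y ->
     A (fst c) /\ ((c = (y, 0)) \/ exists a n m, fst c = io a n /\ y = io a m /\ snd c = S m)))
    as [code Hcode].
  { intro y. destruct (classic (ballset (block_rel io) A y)) as [Hy|Hy].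
    - destruct Hy as [x [Ax [<-|[a [n [m [-> ->]]]]]]].
      + exists (x, 0). intros _. split; [exact Ax|left; reflexivity].
      + exists (io a n, S m). intros _. split; [exact Ax|right; exists a, n, m; auto].
    - exists (y, 0). intro; contradiction. }
  refine (not_small_of_pairs A (fun x => code (f x)) _ _ A_small).
  - intros x y E. apply f_inj.
    destruct (Hcode (f x) (f_ball x)) as [_ [Cx|[a [n [m [Ea [Ex Sx]]]]]]];
    destruct (Hcode (f y) (f_ball y)) as [_ [Cy|[b [n' [m' [Eb [Ey Sy]]]]]]];
    rewrite E in *.
    + congruence.
    + rewrite Cx in Sy. discriminate.
    + rewrite Cy in Sx. discriminate.
    + rewrite Ea in Eb. apply io_inj in Eb. destruct Eb as [<- _].
      rewrite Sx in Sy. injection Sy as <-. rewrite Ex, Ey. reflexivity.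
  - intro x. exact (proj1 (Hcode (f x) (f_ball x))).
Qed.

(* The blocks are infinite, while an almost-permutation relation has, off a
   small set, finite balls; some block starts outside that small set. *)
Lemma block_rel_not_almost_perm (io : K -> nat -> K) :
  (forall x n y m, io x n = io y m -> x = y /\ n = m) -> ~ almost_perm (block_rel io).
Proof.
  intros io_inj [B [B_small [L [_ block_L]]]].
  assert (Ha : exists a, ~ B (io a 0)).
  { apply NNPP. intro Hn. apply B_small. exists (fun a => io a 0). split.
    - intros x y E. apply io_inj in E. tauto.
    - intro a. apply NNPP. intro H. apply Hn. exists a. exact H. }
  destruct Ha as [a nB].
  apply (seq_not_in_list (fun m => io a m) (map (fun l => l (io a 0)) L)).
  - intros n m E. apply io_inj in E. tauto.
  - intro m. destruct (block_L (io a 0) (io a m) nB) as [l [Hl ->]].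
    + right. exists a, 0, m. auto.
    + apply in_map_iff. exists l. split; [reflexivity|exact Hl].
Qed.

(* E' is not maximal: adding a block relation with countably infinite blocks
   gives a strictly larger structure, still unbounded because its generators
   preserve small sets. *)
Lemma join_not_maximal : ~ maximal join_coarse.
Proof.
  intros [_ join_max].
  destruct (absorb (fun _ : K => True) K_infinite) as [io [_ io_inj']].
  assert (io_inj : forall x n y m, io x n = io y m -> x = y /\ n = m)
    by (intros; apply io_inj'; auto).
  set (Gs := fun g : rel K => join_generator g \/ subrel g (block_rel io)).
  assert (Gs_inv : forall g, Gs g -> Gs (rinv g)).
  { intros g [Hg|Hg]; [left; apply join_generator_rinv, Hg|right].
    intros x y H. apply block_rel_sym, Hg, H. }
  apply (Gen_unbounded Gs).
  - intros g [Hg|Hg] A A_small; [exact (join_generator_ball_small g Hg A A_small)|].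
    apply (small_sub _ (ballset (block_rel io) A)).
    + intros y [a [Aa Hay]]. exists a. split; [exact Aa|exact (Hg a y Hay)].
    + exact (block_rel_ball_small io io_inj A A_small).
  - apply join_max.
    + apply Gen_coarse, Gs_inv.
    + apply join_sub_Gen; [exact Gs_inv|intros g Hg; left; exact Hg].
    + exists (block_rel io). split.
      * apply Gen_generator; [right; intros x y H; exact H|intros x y E; left; exact E].
      * intro H. apply (block_rel_not_almost_perm io io_inj), join_almost_perm, H.
Qed.
End UncountableType.

Theorem mainTheorem9 (K : Type)
  (Kunc : ~ exists f : K -> nat, forall x y, f x = f y -> x = y) :
  (forall Y : K -> Prop, bounded (@perm_coarse K) Y <-> finite_set Y) /\
  ultranormal (@perm_coarse K) /\
  ~ extremely_normal (@perm_coarse K) /\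
  (forall E, perm_coarse E -> cjoin (@small_discrete_coarse K) (@perm_coarse K) E) /\
  (exists E, cjoin (@small_discrete_coarse K) (@perm_coarse K) E /\ ~ perm_coarse E) /\
  extremely_normal (cjoin (@small_discrete_coarse K) (@perm_coarse K)) /\
  ~ maximal (cjoin (@small_discrete_coarse K) (@perm_coarse K)).
Proof.
  split; [exact (perm_bounded_iff_finite K Kunc)|].
  split; [exact (perm_ultranormal K Kunc)|].
  split; [exact (perm_not_extremely_normal K Kunc)|].
  split; [intros E HE; apply cjoin_right, HE|].
  split; [exact (join_strictly_larger K Kunc)|].
  split; [exact (join_extremely_normal K Kunc)|].
  exact (join_not_maximal K Kunc).
Qed.
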